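(* Let $m\geq 2$ be an integer and let $\delta(m)=\lceil\log_2(m/3)\rceil$. (i) If $y$ and $v$ are finite binary words such that $yvy$ is a factor of $\mathbf t$ and $|y|=m$, then $2^{\delta(m)}$ divides $|yv|$. (ii) There exist finite binary words $y,v$ such that $yvy$ is a factor of $\mathbf t$, $|y|=m$, and $2^{\delta(m)+1}$ does not divide $|yv|$.
   Context: The Thue–Morse word is the infinite binary word $\mathbf t=\mathbf t_1\mathbf t_2\mathbf t_3\cdots$ where $\mathbf t_i\in\{0,1\}$ has the same parity as the number of $1$'s in the binary expansion of $i-1$ (so $\mathbf t=0110100110010110\cdots$). A factor of $\mathbf t$ is a finite word of the form $\mathbf t_\alpha\mathbf t_{\alpha+1}\cdots\mathbf t_\beta$ (or the empty word). $|w|$ denotes the length of a word $w$; $v$ may be empty. *)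

From mathcomp Require Import all_boot.
Set Implicit Arguments. Unset Strict Implicit. Unset Printing Implicit Defensive.

(* Number of 1's in the binary expansion of n (fuel n suffices since n./2 < n). *)
Fixpoint popcount_aux (fuel n : nat) : nat :=
  match fuel with
  | 0 => 0
  | f.+1 => if n is 0 then 0 else odd n + popcount_aux f n./2
  end.
Definition popcount (n : nat) : nat := popcount_aux n n.

(* 0-indexed Thue-Morse word: tm k = t_{k+1}, i.e. the parity of the
   number of 1's in the binary expansion of k.  (false = 0, true = 1) *)
Definition tm (k : nat) : bool := odd (popcount k).

(* w is a factor of t: w = t_{a+1} ... t_{a+|w|} for some a (empty word included). *)
Definition tm_factor (w : seq bool) : Prop :=
  exists a : nat, w = mkseq (fun k => tm (a + k)) (size w).

(* delta m = ceil(log2(m/3)) for m >= 2, i.e. the least e >= 0 with m <= 3 * 2^e;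
   equivalently the least e with ceil(m/3) <= 2^e. *)
Definition delta (m : nat) : nat := up_log 2 ((m + 2) %/ 3).

From mathcomp Require Import all_boot zify.

Set Implicit Arguments.
Unset Strict Implicit.
Unset Printing Implicit Defensive.

(* Two facts about t drive the argument: t is the fixed point of the morphism
   0 -> 01, 1 -> 10 (indexing from 0, t_{2n} = t_n and t_{2n+1} = 1 - t_n),
   and t contains neither 000 nor 111.  Consequently two
   occurrences of a factor of length at least 4 start at positions of equal
   parity, and halving both positions yields two occurrences of a factor about
   half as long; iterating, two occurrences of a factor of length greater than
   3 * 2^k lie a multiple of 2^(k+1) apart.  For the sharpness, the factor of
   length 3 of t at position 3 reappears at position 10, hence the factor of
   length 3 * 2^e at position 3 * 2^e reappears 7 * 2^e positions later. *)

Lemma popcount_aux_fuel f g n :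
  n <= f -> n <= g -> popcount_aux f n = popcount_aux g n.
Proof.
elim: f g n => [|f IH] [|g] [|n] //= le_nf le_ng.
by rewrite (IH g) // leq_uphalf_double; lia.
Qed.

Lemma popcount_half n : popcount n = odd n + popcount n./2.
Proof.
case: n => [|n] //; rewrite /popcount /=; congr (_ + _).
by apply: popcount_aux_fuel => //; rewrite leq_uphalf_double; lia.
Qed.

Lemma tm_doubleD (b : bool) n : tm (b + n.*2) = b (+) tm n.
Proof.
rewrite /tm popcount_half half_bit_double oddD.
by rewrite [odd (_ + _)]oddD odd_double addbF !oddb.
Qed.

Lemma tm_double n : tm n.*2 = tm n.
Proof. exact: (tm_doubleD false). Qed.

Lemma tm_doubleS n : tm n.*2.+1 = ~~ tm n.
Proof. exact: (tm_doubleD true). Qed.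

Lemma tm_mul_pow2D e n r : r < 2 ^ e -> tm (n * 2 ^ e + r) = tm n (+) tm r.
Proof.
elim: e n r => [|e IH] n r.
  by rewrite expn0 ltnS leqn0 muln1 => /eqP ->; rewrite addn0 addbF.
rewrite expnSr => lt_r.
have lt_half : r./2 < 2 ^ e by rewrite ltn_half_double -muln2.
have -> : n * (2 ^ e * 2) + r = odd r + (n * 2 ^ e + r./2).*2.
  by have := odd_double_half r; rewrite -muln2; lia.
rewrite tm_doubleD IH // -[tm r](congr1 tm (odd_double_half r)) tm_doubleD.
by rewrite addbCA.
Qed.

Lemma tm_no_cube n : ~ (tm n = tm n.+1 /\ tm n.+1 = tm n.+2).
Proof.
rewrite -(odd_double_half n); case: (odd n) => /=.
  by rewrite -doubleS tm_doubleS tm_double => -[_]; case: (tm _).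
by rewrite add0n tm_doubleS tm_double => -[+ _]; case: (tm _).
Qed.

Definition tm_agree i j n := forall r, r < n -> tm (i + r) = tm (j + r).

Lemma tm_agree_sym i j n : tm_agree i j n -> tm_agree j i n.
Proof. by move=> ag r /ag. Qed.

Lemma tm_agree_le i j m n : m <= n -> tm_agree i j n -> tm_agree i j m.
Proof. by move=> le_mn ag r lt_rm; apply: ag; apply: leq_trans le_mn. Qed.

Lemma tm_agree_scale e i j n :
  tm_agree i j n -> tm_agree (i * 2 ^ e) (j * 2 ^ e) (n * 2 ^ e).
Proof.
move=> ag r lt_r; have pos2e : 0 < 2 ^ e by rewrite expn_gt0.
rewrite (divn_eq r (2 ^ e)) !addnA -!mulnDl !tm_mul_pow2D ?ltn_mod // ag //.
by rewrite ltn_divLR.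
Qed.

Lemma tm_agree_even_odd i j : ~ tm_agree i.*2 j.*2.+1 4.
Proof.
move=> ag; apply: (@tm_no_cube j).
move: (ag 0 isT) (ag 1 isT) (ag 2 isT) (ag 3 isT).
rewrite !addnS !addn0 -!doubleS !tm_doubleS !tm_double.
by case: (tm i) (tm i.+1) (tm j) (tm j.+1) (tm j.+2) => [] [] [] [] [].
Qed.

Lemma tm_agree_odd i j : tm_agree i j 4 -> odd i = odd j.
Proof.
rewrite -(odd_double_half i) -(odd_double_half j) !oddD !odd_double !addbF.
by case: (odd i) (odd j) => [] [] // => [/tm_agree_sym|] /tm_agree_even_odd.
Qed.

Lemma tm_agree_half i p n :
  ~~ odd p -> tm_agree i (i + p) n -> tm_agree i./2 (i./2 + p./2) (uphalf n).
Proof.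
move=> p_even ag r lt_r.
have /ag : r.*2 < n by rewrite -gtn_uphalf_double.
have := odd_double_half i; have := odd_double_half p; rewrite (negbTE p_even).
move=> p_double i_split.
have -> : i + r.*2 = odd i + (i./2 + r).*2 by rewrite -!muln2; lia.
have -> : i + p + r.*2 = odd i + (i./2 + p./2 + r).*2 by rewrite -!muln2; lia.
by rewrite !tm_doubleD => /addbI.
Qed.

Lemma tm_agree_shift_even i p n : 3 < n -> tm_agree i (i + p) n -> ~~ odd p.
Proof.
move=> lt3n /(tm_agree_le lt3n) /tm_agree_odd.
by rewrite oddD; case: (odd i); case: (odd p).
Qed.

Lemma tm_agree_dvd k i p n :
  3 * 2 ^ k < n -> tm_agree i (i + p) n -> 2 ^ k.+1 %| p.
Proof.
elim: k i p n => [|k IH] i p n lt_n ag.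
  by rewrite expn1 dvdn2; apply: tm_agree_shift_even ag.
have p_even : ~~ odd p.
  apply: tm_agree_shift_even ag.
  by move: lt_n; rewrite expnS; have := expn_gt0 2 k; lia.
rewrite -(odd_double_half p) (negbTE p_even) add0n -muln2 expnSr dvdn_pmul2r //.
apply: IH (tm_agree_half p_even ag).
by rewrite gtn_uphalf_double -muln2; move: lt_n; rewrite expnS; lia.
Qed.

Definition tm_window a n := mkseq (fun k => tm (a + k)) n.

Lemma tm_windowD a n1 n2 :
  tm_window a (n1 + n2) = tm_window a n1 ++ tm_window (a + n1) n2.
Proof.
rewrite /tm_window /mkseq iotaD map_cat -[in iota n1 _](addn0 n1) iotaDl -map_comp.
by congr (_ ++ _); apply: eq_map => k /=; rewrite addnA.
Qed.

Lemma tm_agree_window i j n : tm_agree i j n <-> tm_window i n = tm_window j n.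
Proof.
split=> [ag | eq_w r lt_r].
  apply: (eq_from_nth (x0 := false)) => [|r]; rewrite ?size_mkseq // => lt_r.
  by rewrite !nth_mkseq // ag.
by have := congr1 (nth false ^~ r) eq_w; rewrite !nth_mkseq.
Qed.

Lemma tm_window_cat a w1 w2 : w1 ++ w2 = tm_window a (size (w1 ++ w2)) ->
  w1 = tm_window a (size w1) /\ w2 = tm_window (a + size w1) (size w2).
Proof.
rewrite size_cat tm_windowD => /eqP.
by rewrite eqseq_cat ?size_mkseq // => /andP[/eqP ? /eqP].
Qed.

Lemma tm_factor_agree y v :
  tm_factor (y ++ v ++ y) -> exists a, tm_agree a (a + size (y ++ v)) (size y).
Proof.
case=> a; rewrite catA => /tm_window_cat[/tm_window_cat[y_eq _] y_eq'].
by exists a; apply/tm_agree_window; rewrite -y_eq -y_eq'.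
Qed.

Lemma tm_agree_factor a p m : m <= p -> tm_agree a (a + p) m ->
  tm_factor (tm_window a m ++ tm_window (a + m) (p - m) ++ tm_window a m).
Proof.
move=> le_mp /tm_agree_window {2}->; exists a.
by rewrite !size_cat !size_mkseq -/(tm_window a _) !tm_windowD -addnA subnKC.
Qed.

Lemma leq_delta m : m <= 3 * 2 ^ delta m.
Proof.
by have := up_logP ((m + 2) %/ 3) (isT : 1 < 2); rewrite -/(delta m); lia.
Qed.

Lemma delta_pred_lt m : 0 < delta m -> 3 * 2 ^ (delta m).-1 < m.
Proof.
rewrite /delta up_log_gt0 /= => /(up_log_gtn (isT : 1 < 2)); lia.
Qed.

Theorem proposition1 (m : nat) (hm : 2 <= m) :
  (forall y v : seq bool,
      tm_factor (y ++ v ++ y) -> size y = m ->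
      2 ^ delta m %| size (y ++ v)) /\
  (exists y v : seq bool,
      [/\ tm_factor (y ++ v ++ y), size y = m &
          ~~ (2 ^ (delta m).+1 %| size (y ++ v))]).
Proof.
split=> [y v /tm_factor_agree[a ag] <- | ].
  have [-> | delta_gt0] := posnP (delta (size y)); first exact: dvd1n.
  by rewrite -(prednK delta_gt0); apply: tm_agree_dvd (delta_pred_lt delta_gt0) ag.
pose e := delta m; pose a := 3 * 2 ^ e.
have ag : tm_agree a (a + 7 * 2 ^ e) m.
  apply: tm_agree_le (leq_delta m) _; rewrite -mulnDl.
  by apply: tm_agree_scale; case=> [|[|[|]]].
have le_m7 : m <= 7 * 2 ^ e by have := leq_delta m; rewrite -/e; lia.
exists (tm_window a m), (tm_window (a + m) (7 * 2 ^ e - m)); split.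
- exact: tm_agree_factor ag.
- exact: size_mkseq.
- rewrite size_cat !size_mkseq subnKC // expnSr [7 * _]mulnC.
  by rewrite dvdn_pmul2l ?expn_gt0.
Qed.
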